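(* Let $n,k\ge1$, $d\ge3$. The cumulant homoscedastic secant variety $\log(\operatorname{Sec}^H_k(\mathcal G_{n,d}))\subseteq\mathbb{A}^K_{n,d}$ is a cone over $C^0_{n,k,d}$: writing $\mathbb{A}^K_{n,d}=\mathbb{A}^{K,1}\times\mathbb{A}^{K,2}\times\mathbb{A}^{K,3}_{n,d}$ (cumulants of order $1$, order $2$, and orders $3$ to $d$), its closure equals $\mathbb{A}^{K,1}\times\mathbb{A}^{K,2}\times C^0_{n,k,d}$, i.e. the first and second order cumulants are unconstrained and the cumulants of orders $3,\dots,d$ range exactly over $C^0_{n,k,d}$.
   Context: Let $u=(u_1,\dots,u_n)$, $V$ the space of real linear forms in $u$. The cumulant space $\mathbb{A}^K_{n,d}$ consists of truncated series $\sum_{1\le|a|\le d}\kappa_au^a/a!$ in $\mathbb{R}[u]/(u)^{d+1}$; $\mathbb{A}^{K,3}_{n,d}$ those with only terms of degree $3,\dots,d$. For a homoscedastic parameter $((\mu_i),(\lambda_i),\Sigma)$ ($\mu_i\in\mathbb{R}^n$, $\sum\lambda_i=1$, $\Sigma$ real symmetric $n\times n$) the cumulant vector is the truncation of $\log\big(\sum_i\lambda_i\exp(u^t\mu_i+\frac12u^t\Sigma u)\big)$; $\log(\operatorname{Sec}^H_k(\mathcal G_{n,d}))$ is the (closure of the) set of these. Let $\Theta^0_{n,k}=\{((L_i),(\lambda_i))\in V^k\times\mathbb{R}^k:\sum\lambda_i=1,\ \sum\lambda_iL_i=0\}$ (centered Dirac mixtures), for $A=((L_i),(\lambda_i))$ let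 $K_A(u)=\log(\sum_i\lambda_ie^{L_i(u)})$ with homogeneous parts $K_A(u)_j$, let $\phi_{n,k,d}:\Theta^0_{n,k}\to\mathbb{A}^{K,3}_{n,d}$, $A\mapsto K_A(u)_3+\dots+K_A(u)_d$, and $C^0_{n,k,d}=\overline{\phi_{n,k,d}(\Theta^0_{n,k})}$. *)

From HB Require Import structures.
From mathcomp Require Import all_boot all_order all_algebra.
From mathcomp Require Import reals.
From mathcomp Require Import mpoly.

Set Implicit Arguments.
Unset Strict Implicit.
Unset Printing Implicit Defensive.

Import Order.TTheory GRing.Theory Num.Theory.
Local Open Scope ring_scope.

Section Cumulants.
Variables (R : realType) (n : nat).

Definition trunc_deg (a b : nat) (p : {mpoly R[n]}) : {mpoly R[n]} :=
  \sum_(m <- msupp p | (a <= mdeg m <= b)%N) p@_m *: 'X_[m].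

(* Truncated exponential: exp(f) mod (u)^{d+1}, for f without constant term. *)
Definition texp (d : nat) (f : {mpoly R[n]}) : {mpoly R[n]} :=
  trunc_deg 0 d (\sum_(j < d.+1) (j`!%:R)^-1 *: f ^+ j).

(* Truncated logarithm: log(g) mod (u)^{d+1}, for g with constant term 1,
   via log(1+h) = sum_{j>=1} (-1)^(j+1) h^j / j. *)
Definition tlog (d : nat) (g : {mpoly R[n]}) : {mpoly R[n]} :=
  trunc_deg 0 d (\sum_(1 <= j < d.+1) ((-1) ^+ j.+1 / j%:R) *: (g - 1) ^+ j).

Definition linform (c : 'I_n -> R) : {mpoly R[n]} := \sum_(j < n) c j *: 'X_j.

Definition halfquad (S : 'M[R]_n) : {mpoly R[n]} :=
  2%:R^-1 *: \sum_(j < n) \sum_(l < n) S j l *: ('X_j * 'X_l).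

Definition in_cumulant_space (d : nat) (p : {mpoly R[n]}) : Prop :=
  forall m : 'X_{1..n}, (mdeg m == 0%N) || (d < mdeg m)%N -> p@_m = 0.

(* Euclidean closure of a set of (truncated) series (coefficientwise, sup-norm). *)
Definition closure_mp (S : {mpoly R[n]} -> Prop) (p : {mpoly R[n]}) : Prop :=
  forall eps : R, 0 < eps ->
    exists q, S q /\ forall m : 'X_{1..n}, `|p@_m - q@_m| < eps.

Definition homosc_cumulant (k d : nat) (mu : 'I_k -> 'I_n -> R)
    (lam : 'I_k -> R) (S : 'M[R]_n) : {mpoly R[n]} :=
  trunc_deg 1 d
    (tlog d (\sum_(i < k) lam i *: texp d (linform (mu i) + halfquad S))).

Definition homosc_cumulant_set (k d : nat) (p : {mpoly R[n]}) : Prop :=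
  exists (mu : 'I_k -> 'I_n -> R) (lam : 'I_k -> R) (S : 'M[R]_n),
    \sum_(i < k) lam i = 1 /\ S^T = S /\ p = homosc_cumulant d mu lam S.

Definition log_sec_homosc (k d : nat) : {mpoly R[n]} -> Prop :=
  closure_mp (homosc_cumulant_set k d).

(* Theta^0_{n,k}: centered Dirac mixtures A = ((L_i),(lambda_i)),
   L_i(u) = u^t c_i. *)
Definition in_Theta0 (k : nat) (c : 'I_k -> 'I_n -> R) (lam : 'I_k -> R) : Prop :=
  \sum_(i < k) lam i = 1 /\ \sum_(i < k) lam i *: linform (c i) = 0.

Definition phi_dirac (k d : nat) (c : 'I_k -> 'I_n -> R) (lam : 'I_k -> R)
  : {mpoly R[n]} :=
  trunc_deg 3 d (tlog d (\sum_(i < k) lam i *: texp d (linform (c i)))).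

Definition C0 (k d : nat) : {mpoly R[n]} -> Prop :=
  closure_mp (fun p => exists (c : 'I_k -> 'I_n -> R) (lam : 'I_k -> R),
    in_Theta0 c lam /\ p = phi_dirac d c lam).

End Cumulants.

(* Modulo degree d+1, the truncated exp and log obey the identities of formal
   power series: exp (a + b) = exp a * exp b, exp (log g) = g and
   log (exp h) = h whenever a, b, h and g - 1 have no constant term.  The last
   two are the univariate identities modulo X^(d+1), which follow from the
   uniqueness of solutions of y' = A y, evaluated at X := h.  Hence the factor
   exp (u^t e + u^t S u / 2) can be pulled out of a homoscedastic mixture:
     log sum_i l_i exp (u^t mu_i + u^t S u / 2)
       = u^t e + u^t S u / 2 + log sum_i l_i exp (u^t (mu_i - e)).
   Taking for e the mean of the mu_i makes the last mixture a centred Dirac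
   mixture, which alone contributes the cumulants of orders 3..d, while
   u^t e + u^t S u / 2 runs over all polynomials with terms of degree 1 and 2.
   So the homoscedastic cumulants are exactly the series whose part of degrees
   3..d lies in phi (Theta^0), and closure commutes with this splitting. *)

From HB Require Import structures.
From mathcomp Require Import all_boot all_order all_algebra.
From mathcomp Require Import reals.
From mathcomp Require Import mpoly.
From mathcomp Require Import ring zify.

Set Implicit Arguments.
Unset Strict Implicit.
Unset Printing Implicit Defensive.

Import Order.TTheory GRing.Theory Num.Theory.
Local Open Scope ring_scope.

Lemma geom_sum_opp (T : pzRingType) (z : T) d :
  (1 + z) * \sum_(i < d) (- z) ^+ i = 1 - (- z) ^+ d.
Proof. by rewrite -[1 - _]opprB subrX1 -opprD mulNr opprK addrC. Qed.

Lemma sum_antidiagonal (V : nmodType) N (g : nat -> nat -> V) :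
  \sum_(k < N) \sum_(i < k.+1) g i (k - i)%N = \sum_(i < N) \sum_(j < N - i) g i j.
Proof.
transitivity (\sum_(0 <= k < N) \sum_(0 <= i < N | (i <= k)%N) g i (k - i)%N).
  rewrite big_mkord; apply: eq_bigr => k _.
  rewrite -(big_mkord xpredT (fun i => g i (k - i)%N)).
  by rewrite (big_nat_widen _ _ _ _ _ (ltn_ord k)).
rewrite (exchange_big_dep_nat xpredT) //= big_mkord; apply: eq_bigr => i _.
rewrite -(big_nat_widenl _ _ _ xpredT (fun k => g i (k - i)%N) (leq0n i)).
rewrite -{1}[nat_of_ord i]add0n big_addn big_mkord.
by apply: eq_bigr => j _; rewrite addnK.
Qed.

Section PolyOrder.
Variables (R : nzRingType) (n : nat).
Implicit Types (p q : {mpoly R[n]}).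

Definition order_ge (k : nat) : {pred {mpoly R[n]}} :=
  [pred p | all [pred m : 'X_{1..n} | k <= mdeg m]%N (msupp p)].

Lemma order_geP k p :
  reflect (forall m, (mdeg m < k)%N -> p@_m = 0) (p \in order_ge k).
Proof.
apply: (iffP allP) => [low m ltmk | low m].
  by apply/eqP; rewrite mcoeff_eq0; apply: contraTN ltmk => /low; rewrite -leqNgt.
by rewrite mcoeff_msupp /= leqNgt; apply: contraNN => /low ->.
Qed.

Lemma order_ge_submod_closed k : submod_closed (order_ge k).
Proof.
split=> [|c p q /order_geP lp /order_geP lq].
  by apply/order_geP => m; rewrite mcoeff0.
by apply/order_geP => m ltmk; rewrite mcoeffD mcoeffZ lp ?lq // mulr0 addr0.
Qed.

HB.instance Definition _ k :=
  GRing.isSubmodClosed.Build R {mpoly R[n]} (order_ge k) (order_ge_submod_closed k).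

Lemma order_ge0 p : p \in order_ge 0.
Proof. exact/order_geP. Qed.

Lemma order_geW k l p : (l <= k)%N -> p \in order_ge k -> p \in order_ge l.
Proof.
by move=> lelk /order_geP low; apply/order_geP => m ltml; rewrite low // (leq_trans ltml).
Qed.

Lemma order_geM a b p q :
  p \in order_ge a -> q \in order_ge b -> p * q \in order_ge (a + b).
Proof.
move=> /allP lp /allP lq; apply/allP => m /msuppM_le /allpairsP.
by case=> -[m1 m2] [/lp /= le1 /lq /= le2 ->]; rewrite mdegD leq_add.
Qed.

Lemma order_geX k p j : p \in order_ge 1 -> (k <= j)%N -> p ^+ j \in order_ge k.
Proof.
move=> p1 lekj; apply: order_geW lekj _; elim: j => [|j IHj]; first exact: order_ge0.
by rewrite exprS -add1n; apply: order_geM.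
Qed.

Lemma dhomog_order_ge k p : p \is k.-homog -> p \in order_ge k.
Proof. by move=> /dhomogP hom; apply/allP => m /hom /= ->. Qed.

Definition eq_upto (d : nat) p q := p - q \in order_ge d.+1.

Lemma eq_upto_refl d p : eq_upto d p p.
Proof. by rewrite /eq_upto subrr rpred0. Qed.

Lemma eq_upto_sym d p q : eq_upto d p q -> eq_upto d q p.
Proof. by rewrite /eq_upto -opprB rpredN. Qed.

Lemma eq_upto_trans d p q r : eq_upto d p q -> eq_upto d q r -> eq_upto d p r.
Proof. by rewrite /eq_upto => pq qr; rewrite -(subrKA q) rpredD. Qed.

Lemma eq_uptoD d p q p' q' :
  eq_upto d p p' -> eq_upto d q q' -> eq_upto d (p + q) (p' + q').
Proof. by rewrite /eq_upto opprD addrACA; apply: rpredD. Qed.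

Lemma eq_uptoZ d c p q : eq_upto d p q -> eq_upto d (c *: p) (c *: q).
Proof. by rewrite /eq_upto -scalerBr; apply: rpredZ. Qed.

Lemma eq_uptoM d p q p' q' :
  eq_upto d p p' -> eq_upto d q q' -> eq_upto d (p * q) (p' * q').
Proof.
rewrite /eq_upto => pp' qq'.
have -> : p * q - p' * q' = (p - p') * q + p' * (q - q').
  by rewrite mulrBl mulrBr addrA subrK.
apply: rpredD; first by rewrite -[d.+1]addn0 order_geM ?order_ge0.
by rewrite -[d.+1]add0n order_geM ?order_ge0.
Qed.

Lemma eq_upto_sum d (I : Type) (r : seq I) (P : pred I) (F G : I -> {mpoly R[n]}) :
  (forall i, P i -> eq_upto d (F i) (G i)) ->
  eq_upto d (\sum_(i <- r | P i) F i) (\sum_(i <- r | P i) G i).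
Proof.
move=> FG; elim/big_rec2: _ => [|i x y Pi]; first exact: eq_upto_refl.
exact/eq_uptoD/FG.
Qed.

Lemma order_ge_eq_upto d k p q :
  (k <= d.+1)%N -> eq_upto d p q -> p \in order_ge k -> q \in order_ge k.
Proof. by move=> lekd /(order_geW lekd) pq pk; rewrite -[q](subKr p) rpredB. Qed.

End PolyOrder.

Section FormalSeries.
Variable R : numFieldType.
Implicit Types (P Q Z : {poly R}).

Definition exp_series (A : lalgType R) (d : nat) (z : A) : A :=
  \sum_(j < d.+1) (j`!%:R)^-1 *: z ^+ j.

Definition log1p_series (A : lalgType R) (d : nat) (z : A) : A :=
  \sum_(1 <= j < d.+1) ((-1) ^+ j.+1 / j%:R) *: z ^+ j.

Lemma dvdp_XnP k P : reflect (forall i, (i < k)%N -> P`_i = 0) ('X^k %| P).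
Proof.
apply: (iffP idP) => [/dvdpP [Q ->] i ltik | low]; first by rewrite coefMXn ltik.
apply/dvdpP; exists (drop_poly k P); rewrite -[LHS](poly_take_drop k) addrC.
suff -> : take_poly k P = 0 by rewrite addr0.
by apply/polyP => i; rewrite coef_take_poly coef0; case: ifP => // /low.
Qed.

Lemma dvdpZ c Q P : Q %| P -> Q %| c *: P.
Proof. by rewrite -mul_polyC; apply: dvdp_mull. Qed.

Lemma dvdp_big (I : Type) (r : seq I) (Pr : pred I) (F : I -> {poly R}) Q :
  (forall i, Pr i -> Q %| F i) -> Q %| \sum_(i <- r | Pr i) F i.
Proof.
by move=> QF; apply: (big_ind (fun P => Q %| P)); [exact: dvdp0 | exact: dvdp_add |].
Qed.

(* Uniqueness for P' = A P, P(0) = 0, modulo X^(d+1): the coefficients of P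
   vanish one after the other. *)
Lemma dvdp_Xn_ode d A P : 'X %| P -> 'X^d %| P^`() - A * P -> 'X^(d.+1) %| P.
Proof.
rewrite -[X in X %| P]expr1 => /dvdp_XnP P0 /dvdp_XnP ode; apply/dvdp_XnP.
suff low i : (i <= d)%N -> forall j, (j <= i)%N -> P`_j = 0.
  by move=> i /low /(_ i (leqnn i)).
elim: i => [_ [|//] _|i IHi ltid j]; first exact: P0.
rewrite leq_eqVlt ltnS => /orP[/eqP-> | ]; last exact: IHi (ltnW ltid) j.
have AP0 : (A * P)`_i = 0.
  by rewrite coefM big1 // => l _; rewrite (IHi (ltnW ltid)) ?mulr0 ?leq_subr.
have := ode i ltid; rewrite coefB AP0 subr0 coef_deriv => /eqP.
by rewrite mulrn_eq0 /= => /eqP.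
Qed.

Lemma dvdX_exp_series_sub1 d Z : 'X %| Z -> 'X %| exp_series d Z - 1.
Proof.
move=> XZ; rewrite /exp_series big_ord_recl expr0 fact0 invr1 scale1r addrAC subrr add0r.
by apply: dvdp_big => j _; apply/dvdpZ/dvdp_exp.
Qed.

Lemma dvdX_log1p_series d Z : 'X %| Z -> 'X %| log1p_series d Z.
Proof.
move=> XZ; rewrite /log1p_series big_nat_cond.
by apply: dvdp_big => j /andP[/andP[j_gt0 _] _]; apply/dvdpZ/dvdp_exp.
Qed.

Lemma deriv_exp_series d Z :
  (exp_series d Z)^`() = Z^`() * (exp_series d Z - (d`!%:R)^-1 *: Z ^+ d).
Proof.
rewrite {2}/exp_series big_ord_recr /= addrK mulr_sumr.
rewrite /exp_series linear_sum big_ord_recl /= derivZ expr0 derivC scaler0 add0r.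
apply: eq_bigr => i _; rewrite derivZ deriv_exp -scaler_nat scalerA -scalerAr.
by rewrite /bump /= add1n factS natrM invfM mulrAC mulVf ?pnatr_eq0 ?mul1r.
Qed.

Lemma deriv_log1p_series d Z :
  (log1p_series d Z)^`() = Z^`() * \sum_(i < d) (- Z) ^+ i.
Proof.
rewrite /log1p_series big_add1 /= big_mkord linear_sum mulr_sumr.
apply: eq_bigr => i _; rewrite linearZ /= deriv_exp -scaler_nat scalerA.
rewrite -mulrA mulVf ?pnatr_eq0 // mulr1 -[- Z]scaleN1r exprZn -scalerAr.
by rewrite !exprS !mulN1r opprK.
Qed.

Lemma exp_log1p_series d :
  'X^(d.+1) %| exp_series d (log1p_series d 'X) - (1 + 'X).
Proof.
set L := log1p_series d 'X; set F := exp_series d L.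
have XL : 'X %| L by apply/dvdX_log1p_series/dvdpp.
apply: (dvdp_Xn_ode (A := L^`())).
  by rewrite opprD addrA dvdp_sub ?dvdX_exp_series_sub1 ?dvdpp.
have dL : (1 + 'X) * L^`() - 1 = - (- 'X) ^+ d.
  by rewrite deriv_log1p_series derivX mul1r geom_sum_opp addrAC subrr add0r.
have -> : (F - (1 + 'X))^`() - L^`() * (F - (1 + 'X)) =
          ((1 + 'X) * L^`() - 1) - L^`() * ((d`!%:R)^-1 *: L ^+ d).
  rewrite derivB deriv_exp_series -/F derivD -[1 : {poly R}]polyC1 derivC derivX.
  set M := _ *: L ^+ d; ring.
by rewrite dL dvdp_sub ?dvdpNr ?dvdp_mull ?dvdpZ ?dvdp_exp2r ?dvdpNr ?dvdpp.
Qed.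

Lemma log1p_exp_series d :
  'X^(d.+1) %| log1p_series d (exp_series d 'X - 1) - 'X.
Proof.
set E := exp_series d 'X; set Z := E - 1.
have XZ : 'X %| Z by apply/dvdX_exp_series_sub1/dvdpp.
apply: (dvdp_Xn_ode (A := 0)); first by rewrite dvdp_sub ?dvdX_log1p_series ?dvdpp.
have dZ : Z^`() = (1 + Z) - (d`!%:R)^-1 *: 'X ^+ d.
  rewrite /Z derivB -[1 : {poly R}]polyC1 derivC subr0 deriv_exp_series derivX.
  by rewrite mul1r [1 + _]addrC subrK.
rewrite mul0r subr0 derivB derivX deriv_log1p_series dZ mulrBl geom_sum_opp.
set S := \sum_(i < d) _; set M := _ *: 'X ^+ d.
have -> : 1 - (- Z) ^+ d - M * S - 1 = - (- Z) ^+ d - M * S by ring.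
by rewrite dvdp_sub ?dvdpNr ?dvdp_mulr ?dvdpZ ?dvdp_exp2r ?dvdpNr ?dvdpp.
Qed.

End FormalSeries.

Section SeriesSubstitution.
Variables (R : numFieldType) (n : nat).
Implicit Types (a b h : {mpoly R[n]}) (P : {poly R}).

Lemma horner_alg_order_ge k h P :
  h \in order_ge 1 -> 'X^k %| P -> horner_alg h P \in order_ge k.
Proof.
move=> h1 /dvdpP [Q ->]; rewrite rmorphM rmorphXn /= horner_algX.
by rewrite -[k]add0n order_geM ?order_ge0 ?order_geX.
Qed.

Lemma eq_upto_horner_alg d a b P :
  eq_upto d a b -> eq_upto d (horner_alg a P) (horner_alg b P).
Proof.
move=> ab; elim/poly_ind: P => [|P c IHP]; first by rewrite !rmorph0; apply: eq_upto_refl.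
rewrite !rmorphD !rmorphM /= !horner_algC !horner_algX.
by apply: eq_uptoD; [apply: eq_uptoM | apply: eq_upto_refl].
Qed.

Lemma horner_alg_exp_series d h P :
  horner_alg h (exp_series d P) = exp_series d (horner_alg h P).
Proof.
rewrite rmorph_sum; apply: eq_bigr => j _.
by rewrite -mul_polyC rmorphM rmorphXn /= horner_algC mulr_algl.
Qed.

Lemma horner_alg_log1p_series d h P :
  horner_alg h (log1p_series d P) = log1p_series d (horner_alg h P).
Proof.
rewrite rmorph_sum; apply: eq_bigr => j _.
by rewrite -mul_polyC rmorphM rmorphXn /= horner_algC mulr_algl.
Qed.

Lemma eq_upto_exp_series d a b :
  eq_upto d a b -> eq_upto d (exp_series d a) (exp_series d b).
Proof.
move=> ab; rewrite -[a](horner_algX a) -[b](horner_algX b) -!horner_alg_exp_series.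
exact: eq_upto_horner_alg.
Qed.

Lemma eq_upto_log1p_series d a b :
  eq_upto d a b -> eq_upto d (log1p_series d a) (log1p_series d b).
Proof.
move=> ab; rewrite -[a](horner_algX a) -[b](horner_algX b) -!horner_alg_log1p_series.
exact: eq_upto_horner_alg.
Qed.

Lemma exp_series_sub1_order_ge d h :
  h \in order_ge 1 -> exp_series d h - 1 \in order_ge 1.
Proof.
move=> h1; rewrite -[h](horner_algX h) -horner_alg_exp_series.
rewrite -(rmorph1 (horner_alg h)) -rmorphB.
by apply: horner_alg_order_ge; rewrite // expr1 dvdX_exp_series_sub1 ?dvdpp.
Qed.

Lemma log1p_series_order_ge d h : h \in order_ge 1 -> log1p_series d h \in order_ge 1.
Proof.
move=> h1; rewrite -[h](horner_algX h) -horner_alg_log1p_series.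
by apply: horner_alg_order_ge; rewrite // expr1 dvdX_log1p_series ?dvdpp.
Qed.

Lemma eq_upto_exp_log1p d h :
  h \in order_ge 1 -> eq_upto d (exp_series d (log1p_series d h)) (1 + h).
Proof.
move=> h1; rewrite /eq_upto -[h](horner_algX h) -(rmorph1 (horner_alg h)).
rewrite -rmorphD -horner_alg_log1p_series -horner_alg_exp_series -rmorphB.
exact: horner_alg_order_ge h1 (exp_log1p_series _ d).
Qed.

Lemma eq_upto_log1p_exp d h :
  h \in order_ge 1 -> eq_upto d (log1p_series d (exp_series d h - 1)) h.
Proof.
move=> h1; rewrite /eq_upto -[h](horner_algX h) -(rmorph1 (horner_alg h)).
rewrite -horner_alg_exp_series -rmorphB -horner_alg_log1p_series -rmorphB.
exact: horner_alg_order_ge h1 (log1p_exp_series _ d).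
Qed.

Lemma exp_seriesD d a b : a \in order_ge 1 -> b \in order_ge 1 ->
  eq_upto d (exp_series d (a + b)) (exp_series d a * exp_series d b).
Proof.
(* Both sides are sums of t i j over i, j <= d, the left one only over i + j <= d. *)
move=> a1 b1; pose t i j := ((i`!%:R)^-1 *: a ^+ i) * ((j`!%:R)^-1 *: b ^+ j).
have t_ge i j : t i j \in order_ge (i + j) by rewrite order_geM ?rpredZ ?order_geX.
have expD : exp_series d (a + b) = \sum_(i < d.+1) \sum_(j < d.+1 - i) t i j.
  rewrite -sum_antidiagonal; apply: eq_bigr => k _.
  rewrite addrC exprDn scaler_sumr; apply: eq_bigr => i _.
  have le_ik : (i <= k)%N by rewrite -ltnS.
  have binom : (k`!%:R^-1 * 'C(k, i)%:R = i`!%:R^-1 * (k - i)`!%:R^-1 :> R).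
    rewrite -(bin_fact le_ik) !natrM; field.
    by rewrite !pnatr_eq0 -!lt0n bin_gt0 le_ik !fact_gt0.
  by rewrite /t -scaler_nat scalerA binom [b ^+ _ * _]mulrC -scalerA scalerAr scalerAl.
have expM : exp_series d a * exp_series d b = \sum_(i < d.+1) \sum_(j < d.+1) t i j.
  by rewrite mulr_suml; apply: eq_bigr => i _; rewrite mulr_sumr.
rewrite expD expM /eq_upto -sumrB; apply: rpred_sum => i _.
rewrite -!(big_mkord xpredT (t i)) (big_cat_nat (leq0n _) (leq_subr i d.+1)) /=.
rewrite opprD addrA subrr add0r rpredN big_nat_cond; apply: rpred_sum => j.
by case/andP=> /andP[le_j _] _; apply: order_geW (t_ge i j); rewrite -leq_subLR.
Qed.

End SeriesSubstitution.

Section Truncation.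
Variables (R : realType) (n : nat).
Implicit Types (p q : {mpoly R[n]}).

Lemma mcoeff_trunc_deg a b p m :
  (trunc_deg a b p)@_m = if (a <= mdeg m <= b)%N then p@_m else 0.
Proof.
rewrite /trunc_deg raddf_sum /=.
under eq_bigr do rewrite mcoeffZ mcoeffX.
rewrite -big_filter; have [m_in | m_notin] := boolP (m \in msupp p); last first.
  rewrite (memN_msupp_eq0 m_notin) if_same big1_seq // => m'.
  rewrite mem_filter => /andP[_ /andP[_ m'_in]].
  by case: eqP m'_in => [->|]; rewrite ?(negbTE m_notin) ?mulr0.
case: ifP => mab.
  rewrite (bigD1_seq m) ?filter_uniq ?msupp_uniq ?mem_filter ?mab //= eqxx mulr1.
  by rewrite big1 ?addr0 // => m' /negbTE ->; rewrite mulr0.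
rewrite big1_seq // => m'; rewrite mem_filter => /andP[_ /andP[m'ab _]].
by case: eqP m'ab => [->|]; rewrite ?mab ?mulr0.
Qed.

Lemma trunc_degD a b p q :
  trunc_deg a b (p + q) = trunc_deg a b p + trunc_deg a b q.
Proof.
apply/mpolyP => m; rewrite mcoeffD !mcoeff_trunc_deg mcoeffD.
by case: ifP; rewrite ?addr0.
Qed.

Lemma trunc_degB a b p q :
  trunc_deg a b (p - q) = trunc_deg a b p - trunc_deg a b q.
Proof.
apply/mpolyP => m; rewrite mcoeffB !mcoeff_trunc_deg mcoeffB.
by case: ifP; rewrite ?subr0.
Qed.

Lemma trunc_deg_trunc_deg a b c e p :
  trunc_deg a b (trunc_deg c e p) = trunc_deg (maxn a c) (minn b e) p.
Proof.
apply/mpolyP => m; rewrite !mcoeff_trunc_deg geq_max leq_min.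
by case: (a <= _)%N (c <= _)%N (_ <= b)%N (_ <= e)%N => [] [] [] [].
Qed.

Lemma trunc_deg_empty a b p : (b < a)%N -> trunc_deg a b p = 0.
Proof.
move=> ltba; apply/mpolyP => m; rewrite mcoeff_trunc_deg mcoeff0.
by case: ifP => // /andP[leam lemb]; have := leq_trans leam lemb; rewrite leqNgt ltba.
Qed.

Lemma trunc_deg_split a b c p : (a <= b.+1)%N -> (b <= c)%N ->
  trunc_deg a c p = trunc_deg a b p + trunc_deg b.+1 c p.
Proof.
move=> leab lebc; apply/mpolyP => m; rewrite mcoeffD !mcoeff_trunc_deg.
by do 3 case: ifP => ?; rewrite ?addr0 ?add0r //; exfalso; lia.
Qed.

Lemma trunc_deg_dhomog a b j p :
  p \is j.-homog -> trunc_deg a b p = if (a <= j <= b)%N then p else 0.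
Proof.
move=> hom; apply/mpolyP => m; rewrite mcoeff_trunc_deg.
have [<- | nej] := eqVneq (mdeg m) j; first by case: ifP; rewrite ?mcoeff0.
rewrite (dhomog_nemf_coeff hom nej) if_same.
by case: ifP; rewrite ?mcoeff0 ?(dhomog_nemf_coeff hom nej).
Qed.

Lemma trunc_deg_order_ge k a b p : p \in order_ge k -> trunc_deg a b p \in order_ge k.
Proof.
move=> /order_geP low; apply/order_geP => m ltmk.
by rewrite mcoeff_trunc_deg low ?if_same.
Qed.

Lemma eq_upto_trunc_deg0 d p : eq_upto d (trunc_deg 0 d p) p.
Proof.
by apply/order_geP => m; rewrite ltnS mcoeffB mcoeff_trunc_deg => ->; rewrite subrr.
Qed.

Lemma eq_upto_trunc_deg d a b p q :
  (b <= d)%N -> eq_upto d p q -> trunc_deg a b p = trunc_deg a b q.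
Proof.
move=> lebd /order_geP pq; apply/mpolyP => m; rewrite !mcoeff_trunc_deg.
case: ifP => // /andP[_ lemb]; apply/eqP; rewrite -subr_eq0 -mcoeffB pq //.
by rewrite ltnS (leq_trans lemb).
Qed.

Lemma in_cumulant_spaceE d p : in_cumulant_space d p <-> trunc_deg 1 d p = p.
Proof.
split=> [cum | <- m m_out]; last by rewrite mcoeff_trunc_deg; case: ifP => // ?; lia.
apply/mpolyP => m; rewrite mcoeff_trunc_deg; case: ifP => // m_out.
by rewrite cum //; lia.
Qed.

End Truncation.

Section TruncatedExpLog.
Variables (R : realType) (n : nat).
Implicit Types (a b f g h : {mpoly R[n]}).

Lemma texp_sub1_order_ge d h : h \in order_ge 1 -> texp d h - 1 \in order_ge 1.
Proof.
move=> h1; apply: (order_ge_eq_upto (d := d) (p := exp_series d h - 1)) => //.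
  exact: eq_uptoD (eq_upto_sym (eq_upto_trunc_deg0 _ _)) (eq_upto_refl _ _).
exact: exp_series_sub1_order_ge.
Qed.

Lemma tlog_order_ge d g : g - 1 \in order_ge 1 -> tlog d g \in order_ge 1.
Proof. by move=> g1; apply/trunc_deg_order_ge/log1p_series_order_ge. Qed.

Lemma eq_upto_tlog d f g : eq_upto d f g -> tlog d f = tlog d g.
Proof.
move=> fg; apply: (eq_upto_trunc_deg (d := d)) => //.
exact: eq_upto_log1p_series (eq_uptoD fg (eq_upto_refl _ _)).
Qed.

Lemma texpD d a b : a \in order_ge 1 -> b \in order_ge 1 ->
  eq_upto d (texp d (a + b)) (texp d a * texp d b).
Proof.
move=> a1 b1; apply: eq_upto_trans (eq_upto_trunc_deg0 _ _) _.
apply: eq_upto_trans (exp_seriesD d a1 b1) _.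
by apply: eq_uptoM; apply/eq_upto_sym/eq_upto_trunc_deg0.
Qed.

Lemma tlogK d g : g - 1 \in order_ge 1 -> eq_upto d (texp d (tlog d g)) g.
Proof.
move=> g1; apply: eq_upto_trans (eq_upto_trunc_deg0 _ _) _.
apply: eq_upto_trans (eq_upto_exp_series (eq_upto_trunc_deg0 _ _)) _.
rewrite [X in eq_upto _ _ X](_ : g = 1 + (g - 1)); last by rewrite addrC subrK.
exact: eq_upto_exp_log1p.
Qed.

Lemma texpK d h : h \in order_ge 1 -> eq_upto d (tlog d (texp d h)) h.
Proof.
move=> h1; apply: eq_upto_trans (eq_upto_trunc_deg0 _ _) _.
apply: eq_upto_trans (eq_upto_log1p_exp d h1).
exact: eq_upto_log1p_series (eq_uptoD (eq_upto_trunc_deg0 _ _) (eq_upto_refl _ _)).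
Qed.

Lemma tlog_mixture_shift d k (lam : 'I_k -> R) a (b : 'I_k -> {mpoly R[n]}) :
  \sum_(i < k) lam i = 1 -> a \in order_ge 1 -> (forall i, b i \in order_ge 1) ->
  eq_upto d (tlog d (\sum_(i < k) lam i *: texp d (a + b i)))
            (a + tlog d (\sum_(i < k) lam i *: texp d (b i))).
Proof.
move=> lam1 a1 b1; pose G := \sum_(i < k) lam i *: texp d (b i).
have G1 : G - 1 \in order_ge 1.
  rewrite -(scale1r (1 : {mpoly R[n]})) -lam1 scaler_suml -sumrB.
  apply: rpred_sum => i _.
  by rewrite -scalerBr rpredZ ?texp_sub1_order_ge.
have mix : eq_upto d (\sum_(i < k) lam i *: texp d (a + b i)) (texp d (a + tlog d G)).
  apply: (eq_upto_trans (q := texp d a * G)).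
    rewrite /G mulr_sumr; apply: eq_upto_sum => i _; rewrite -scalerAr.
    exact/eq_uptoZ/texpD.
  apply: (eq_upto_trans (q := texp d a * texp d (tlog d G))).
    exact: eq_uptoM (eq_upto_refl _ _) (eq_upto_sym (tlogK d G1)).
  exact/eq_upto_sym/texpD/tlog_order_ge.
have aG1 : a + tlog d G \in order_ge 1 by rewrite rpredD ?tlog_order_ge.
by move: (texpK d aG1); rewrite -(eq_upto_tlog mix).
Qed.

End TruncatedExpLog.

Section GaussianExponent.
Variables (R : realType) (n : nat).
Implicit Types (c e : 'I_n -> R) (S : 'M[R]_n) (P Q : {mpoly R[n]}).

Lemma linform_dhomog c : linform c \is 1.-homog.
Proof. by apply: rpred_sum => j _; rewrite rpredZ // dhomogX; apply/eqP/mdeg1. Qed.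

Lemma halfquad_dhomog S : halfquad S \is 2.-homog.
Proof.
apply/rpredZ/rpred_sum => j _; apply: rpred_sum => l _.
by rewrite rpredZ // (dhomogM (d := 1) (e := 1)) // dhomogX; apply/eqP/mdeg1.
Qed.

Lemma linform0 : linform (fun _ => 0) = 0 :> {mpoly R[n]}.
Proof. by apply: big1 => j _; rewrite scale0r. Qed.

Lemma linformD c c' : linform (fun j => c j + c' j) = linform c + linform c'.
Proof. by rewrite -big_split; apply: eq_bigr => j _; rewrite scalerDl. Qed.

Lemma linformZ r c : linform (fun j => r * c j) = r *: linform c.
Proof. by rewrite scaler_sumr; apply: eq_bigr => j _; rewrite scalerA. Qed.

Lemma linform_shift c e : linform c = linform e + linform (fun j => c j - e j).
Proof. by rewrite -linformD; apply: eq_bigr => j _; rewrite addrC subrK. Qed.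

Lemma linform_sum k (w : 'I_k -> R) (c : 'I_k -> 'I_n -> R) :
  \sum_(i < k) w i *: linform (c i) = linform (fun j => \sum_(i < k) w i * c i j).
Proof.
rewrite /linform; under eq_bigr do rewrite scaler_sumr.
rewrite exchange_big; apply: eq_bigr => j _; rewrite scaler_suml.
by apply: eq_bigr => i _; rewrite scalerA.
Qed.

Fact halfquad_is_linear : linear (@halfquad R n).
Proof.
move=> r S S'; rewrite /halfquad scalerA mulrC -scalerA -scalerDr; congr (_ *: _).
rewrite scaler_sumr -big_split; apply: eq_bigr => j _.
rewrite scaler_sumr -big_split; apply: eq_bigr => l _.
by rewrite !mxE scalerDl scalerA.
Qed.

HB.instance Definition _ :=
  GRing.isLinear.Build R (matrix R n n) {mpoly R[n]} *:%R (@halfquad R n)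
    halfquad_is_linear.

Lemma halfquad_delta (l j : 'I_n) :
  halfquad (delta_mx l j : 'M[R]_n) = 2^-1 *: ('X_l * 'X_j).
Proof.
rewrite /halfquad (bigD1 l) //= [X in _ + X]big1 => [|a /negbTE nal]; last first.
  by apply: big1 => b _; rewrite mxE nal scale0r.
rewrite addr0 (bigD1 j) //= [X in _ + X]big1 => [|b /negbTE nbj]; last first.
  by rewrite mxE eqxx nbj scale0r.
by rewrite mxE !eqxx scale1r addr0.
Qed.

Definition lin_quad_form P :=
  exists e S, S^T = S /\ P = linform e + halfquad S.

Lemma lin_quad_form0 : lin_quad_form 0.
Proof.
by exists (fun _ => 0), 0; rewrite trmx0 raddf0 linform0 addr0.
Qed.

Lemma lin_quad_formD P Q : lin_quad_form P -> lin_quad_form Q -> lin_quad_form (P + Q).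
Proof.
move=> [e [S [symS ->]]] [e' [S' [symS' ->]]].
exists (fun j => e j + e' j), (S + S'); rewrite linformD raddfD addrACA.
by rewrite linearD /= symS symS'.
Qed.

Lemma lin_quad_formZ r P : lin_quad_form P -> lin_quad_form (r *: P).
Proof.
move=> [e [S [symS ->]]]; exists (fun j => r * e j), (r *: S).
split; first by rewrite linearZ /= symS.
by rewrite linformZ linearZ scalerDr.
Qed.

Lemma lin_quad_form_monomial m : (1 <= mdeg m <= 2)%N -> lin_quad_form 'X_[m].
Proof.
case/andP=> m_gt0 m_le2.
have [j m_j] : exists j, (0 < m j)%N.
  apply/existsP; apply: contraTT m_gt0 => /existsPn m_0.
  rewrite -ltnNge ltnS leqn0 mdeg_eq0.
  by apply/eqP/mnmP => i; rewrite mnm0E; apply/eqP; rewrite -leqn0 leqNgt m_0.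
have Uj_le : (U_(j) <= m)%MM by apply/mnm_lepP => i; rewrite mnm1E; case: eqP => // <-.
rewrite -(submK Uj_le) mpolyXD.
have : (mdeg (m - U_(j)) <= 1)%N.
  by move: m_le2; rewrite -{1}(submK Uj_le) mdegD mdeg1 addn1.
rewrite leq_eqVlt ltnS leqn0 mdeg_eq0 => /orP[/mdeg1P[l /eqP->] | /eqP->].
  exists (fun _ => 0), (delta_mx l j + delta_mx j l).
  rewrite linearD /= !trmx_delta addrC; split=> //.
  rewrite raddfD /= !halfquad_delta [_ * 'X_l]mulrC -scalerDr -mulr2n -scaler_nat scalerA.
  rewrite mulVf ?pnatr_eq0 // scale1r.
  by rewrite linform0 add0r.
exists (fun i => (i == j)%:R), 0; rewrite trmx0 raddf0 addr0 mpolyX0 mul1r; split=> //.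
rewrite /linform (bigD1 j) //= eqxx scale1r big1 ?addr0 // => i /negbTE ->.
by rewrite scale0r.
Qed.

Lemma lin_quad_form_trunc_deg12 P : lin_quad_form (trunc_deg 1 2 P).
Proof.
rewrite /trunc_deg; elim/big_rec: _ => [|m Q /andP[m_gt0 m_le2] lqQ].
  exact: lin_quad_form0.
by apply/lin_quad_formD/lqQ/lin_quad_formZ/lin_quad_form_monomial/andP.
Qed.

End GaussianExponent.

Section CumulantCone.
Variables (R : realType) (n : nat).
Implicit Types (p q : {mpoly R[n]}).

Lemma homosc_cumulant_shift d k (mu : 'I_k -> 'I_n -> R) lam S (e : 'I_n -> R) :
  \sum_(i < k) lam i = 1 ->
  homosc_cumulant d mu lam S = trunc_deg 1 d (linform e + halfquad S +
    tlog d (\sum_(i < k) lam i *: texp d (linform (fun j => mu i j - e j)))).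
Proof.
move=> lam1; apply: (eq_upto_trunc_deg (d := d)) => //.
(* Rewrite on the left only: matching the sum on the right would unfold [texp]. *)
rewrite [X in eq_upto _ X _](_ : _ = tlog d (\sum_(i < k) lam i *:
    texp d (linform e + halfquad S + linform (fun j => mu i j - e j)))).
  2: by apply: congr1; apply: eq_bigr => i _; rewrite (linform_shift (mu i) e) addrAC.
have lin1 (c : 'I_n -> R) : linform c \in order_ge 1.
  exact/dhomog_order_ge/linform_dhomog.
have quad1 : halfquad S \in order_ge 1.
  by apply: (order_geW (k := 2)) => //; apply/dhomog_order_ge/halfquad_dhomog.
by apply: tlog_mixture_shift; rewrite // rpredD.
Qed.

Definition dirac_cumulant_set k d p : Prop :=
  exists (c : 'I_k -> 'I_n -> R) (lam : 'I_k -> R),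
    in_Theta0 c lam /\ p = phi_dirac d c lam.

Lemma homosc_cumulant_setE k d p : (2 <= d)%N ->
  homosc_cumulant_set k d p <->
  in_cumulant_space d p /\ dirac_cumulant_set k d (trunc_deg 3 d p).
Proof.
move=> d_ge2; split=> [[mu [lam [S [lam1 [_ ->]]]]] | [cum [c [lam [[lam1 _] trp]]]]].
  split; first by apply/in_cumulant_spaceE; rewrite trunc_deg_trunc_deg maxnn minnn.
  pose e j := \sum_(i < k) lam i * mu i j.
  exists (fun i j => mu i j - e j), lam; split.
    split=> //; rewrite linform_sum -linform0; apply: eq_bigr => j _.
    by under eq_bigr do rewrite mulrBr; rewrite sumrB -mulr_suml lam1 mul1r subrr.
  rewrite (homosc_cumulant_shift _ _ _ e lam1) trunc_deg_trunc_deg minnn.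
  rewrite (_ : maxn 3 1 = 3) // !trunc_degD (trunc_deg_dhomog _ _ (linform_dhomog _)).
  by rewrite (trunc_deg_dhomog _ _ (halfquad_dhomog _)) !add0r.
pose T := tlog d (\sum_(i < k) lam i *: texp d (linform (c i))).
have [e [S [symS eS]]] := lin_quad_form_trunc_deg12 (p - T).
exists (fun i j => c i j + e j), lam, S.
split; first exact: lam1; split; first exact: symS.
rewrite (homosc_cumulant_shift _ _ _ e lam1).
have -> : \sum_(i < k) lam i *: texp d (linform (fun j => c i j + e j - e j)) =
          \sum_(i < k) lam i *: texp d (linform (c i)).
  by apply: eq_bigr => i _; congr (_ *: texp d _); apply: eq_bigr => j _; rewrite addrK.
rewrite -/T -eS trunc_degD trunc_deg_trunc_deg maxnn (minn_idPr d_ge2).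
rewrite (@trunc_deg_split _ _ 1 2 d T) // -[trunc_deg 3 d T]trp trunc_degB addrA subrK.
by rewrite -trunc_deg_split //; symmetry; apply/in_cumulant_spaceE.
Qed.

Lemma eq_closure_mp (A B : {mpoly R[n]} -> Prop) p :
  (forall q, A q <-> B q) -> closure_mp A p <-> closure_mp B p.
Proof.
by move=> AB; split=> cl eps eps_gt0; have [q [/AB Bq close]] := cl eps eps_gt0; exists q.
Qed.

Lemma closure_mp_cone d (D : {mpoly R[n]} -> Prop) p :
  (2 <= d)%N -> (forall q, D q -> trunc_deg 3 d q = q) ->
  closure_mp (fun q => in_cumulant_space d q /\ D (trunc_deg 3 d q)) p <->
  in_cumulant_space d p /\ closure_mp D (trunc_deg 3 d p).
Proof.
move=> d_ge2 D_trunc; split=> [cl | [cum cl] eps eps_gt0].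
  split=> [m m_out | eps eps_gt0].
    apply/eqP/negPn/negP => pm_neq0; have pm_gt0 : 0 < `|p@_m| by rewrite normr_gt0.
    by have [q [[cum_q _] /(_ m)]] := cl _ pm_gt0; rewrite cum_q // subr0 ltxx.
  have [q [[_ Dq] close]] := cl eps eps_gt0; exists (trunc_deg 3 d q); split=> // m.
  by rewrite !mcoeff_trunc_deg; case: ifP; rewrite ?subrr ?normr0.
have [q [Dq close]] := cl eps eps_gt0.
have tr3 : trunc_deg 3 d (trunc_deg 1 2 p + q) = q.
  rewrite trunc_degD trunc_deg_trunc_deg (minn_idPr d_ge2).
  by rewrite trunc_deg_empty ?add0r ?D_trunc.
exists (trunc_deg 1 2 p + q); rewrite tr3; split.
  split=> //; apply/in_cumulant_spaceE.
  rewrite trunc_degD trunc_deg_trunc_deg maxnn (minn_idPr d_ge2); congr (_ + _).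
  by rewrite -(D_trunc q Dq) trunc_deg_trunc_deg minnn (_ : maxn 1 3 = 3).
move=> m; rewrite -[X in `|X@_m - _|](proj1 (in_cumulant_spaceE d p) cum).
by rewrite (@trunc_deg_split _ _ 1 2 d) // !mcoeffD opprD addrACA subrr add0r.
Qed.

End CumulantCone.

Theorem lemma3p3 (R : realType) (n k d : nat) :
  (1 <= n)%N -> (1 <= k)%N -> (3 <= d)%N ->
  forall p : {mpoly R[n]},
    log_sec_homosc k d p <->
    (in_cumulant_space d p /\ C0 k d (trunc_deg 3 d p)).
Proof.
move=> _ _ d_ge3 p; have d_ge2 : (2 <= d)%N := ltnW d_ge3.
have phi_trunc (q : {mpoly R[n]}) : dirac_cumulant_set k d q -> trunc_deg 3 d q = q.
  by move=> [c [lam [_ ->]]]; rewrite trunc_deg_trunc_deg maxnn minnn.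
apply: (iff_trans _ (closure_mp_cone p d_ge2 phi_trunc)).
by apply: eq_closure_mp => q; apply: homosc_cumulant_setE.
Qed.
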